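(* Let $L$ be a finite lattice, $\varphi\in M_\infty(L)$, and let $(a_1,\dots,a_n)$ be a linear extension of $L$. Set $\varphi_0=\varphi$ and $\varphi_i=\Lambda_{a_i}\varphi_{i-1}$ for $i=1,\dots,n$. Let $\Psi_i\in M_\infty(\mathcal L)$ satisfy $\Pi(\Psi_i)=\lambda(\varphi_i;a_{i+1},\cdot)$ for $i=0,\dots,n-1$, let $\Psi_n\in M_\infty(\mathcal L)$ satisfy $\Pi(\Psi_n)=\varphi_n$, and put $\Phi=\sum_{i=0}^n\Psi_i$. Then $\Phi$ is the Möbius extension of $\varphi$.
   Context: $L$ is a finite lattice with meet $\wedge$ and join $\vee$. A linear extension of $L$ is an enumeration $(a_1,\dots,a_n)$ of all elements of $L$ such that $i<j$ whenever $a_i<a_j$. Completely monotone: all iterated differences $\nabla_a\varphi(x)=\varphi(x)-\varphi(x\wedge a)$ nonnegative. $M_\infty(L)$: nonnegative completely monotone functions on $L$. A path from $a$ to $b$ is a sequence $H=(h_0,\dots,h_m)$ of distinct elements with $h_0=a$, $h_m=b$; $\varphi(H)=\sum_{i=0}^m\varphi(h_i)-\sum_{i=1}^m\varphi(h_{i-1}\vee h_i)$; $\lambda(\varphi;a,b)=\max\{\varphi(H)\}$ over such paths; $\Lambda_a\varphi(x)=\varphi(x)-\lambda(\varphi;a,x)$. $\mathcal L$ is the set of nonempty up-sets of $L$ ordered by $U\preceq V$ iff $U\supseteq V$ (meet = union); $M_\infty(\mathcal L)$ is the set of nonnegative completely monotone functions on $(\mathcal L,\preceq)$; $\Pi(\Psi)(x)=\Psi(\langle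 x\rangle^* )$ with $\langle x\rangle^*=\{y:y\ge x\}$. For $\varphi\in M_\infty(L)$ with Möbius inverse $f$ ($\varphi(x)=\sum_{y\le x}f(y)$), its Möbius extension is $\Phi(U)=\sum_{V\preceq U}F(V)$ with $F(\langle x\rangle^* )=f(x)$ and $F=0$ on non-principal up-sets. *)

From mathcomp Require Import all_boot all_order all_algebra.
Set Implicit Arguments. Unset Strict Implicit. Unset Printing Implicit Defensive.
Import Order.Theory GRing.Theory Num.Theory.
Local Open Scope ring_scope.

Section Defs.
Context {d : Order.disp_t} {T : finLatticeType d} {R : realFieldType}.

Definition nabla {X : Type} (meet : X -> X -> X) (a : X) (g : X -> R) : X -> R :=
  fun x => g x - g (meet x a).

(* all iterated differences (of order >= 1, with arguments in D) are
   nonnegative on D; D must be closed under meet *)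
Definition completely_monotone_on {X : Type} (D : pred X) (meet : X -> X -> X)
  (g : X -> R) : Prop :=
  forall s : seq X, (0 < size s)%N -> all D s ->
  forall x, D x -> 0 <= foldr (nabla meet) g s x.

Definition M_inf_L (phi : T -> R) : Prop :=
  (forall x, 0 <= phi x) /\ completely_monotone_on predT (@Order.meet d T) phi.

Definition pathval (phi : T -> R) (h0 : T) (t : seq T) : R :=
  \sum_(x <- h0 :: t) phi x
  - \sum_(y <- pairmap (fun u v => (u `|` v)%O) h0 t) phi y.

Definition all_uniq_seqs : seq (seq T) :=
  flatten [seq permutations (enum A) | A : {set T}].

Definition paths_from (a b : T) : seq (seq T) :=
  [seq t <- all_uniq_seqs | uniq (a :: t) && (last a t == b)].

(* The seed of
   the max is the value of an actual path from a to b ((a) if a = b, (a,b)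
   otherwise), so this is exactly the maximum over the (nonempty) set. *)
Definition lambda (phi : T -> R) (a b : T) : R :=
  \big[Num.max/pathval phi a (if a == b then [::] else [:: b])]_(t <- paths_from a b)
     pathval phi a t.

Definition Lambda (a : T) (phi : T -> R) : T -> R :=
  fun x => phi x - lambda phi a x.

(* the poset \mathcal L of nonempty up-sets; U <= V iff U \supseteq V,
   meet = union.  Functions on \mathcal L are functions {set T} -> R whose
   values outside \mathcal L are irrelevant. *)
Definition up_closed (U : {set T}) : bool :=
  [forall x in U, forall y, (x <= y)%O ==> (y \in U)].

Definition inLL (U : {set T}) : bool := (U != set0) && up_closed U.

Definition prin (x : T) : {set T} := [set y | (x <= y)%O].

Definition Pi (Psi : {set T} -> R) : T -> R := fun x => Psi (prin x).

Definition M_inf_LL (Psi : {set T} -> R) : Prop :=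
  (forall U, inLL U -> 0 <= Psi U) /\
  completely_monotone_on inLL (@setU T) Psi.

Definition moebF (f : T -> R) (V : {set T}) : R :=
  if [pick x | V == prin x] is Some x then f x else 0.

(* Moebius extension: Phi(U) = sum_{V <= U} F(V), i.e. over V in \mathcal L
   with V \supseteq U *)
Definition moebius_ext (f : T -> R) (U : {set T}) : R :=
  \sum_(V : {set T} | inLL V && (U \subset V)) moebF f V.

End Defs.

From mathcomp Require Import all_boot all_order all_algebra.
From mathcomp Require Import lra.
Import Order.Theory GRing.Theory Num.Theory.
Local Open Scope ring_scope.

(* Write phi = zeta f and let g_i be f restricted to {a_i, ..., a_(n-1)}.
   By induction phi_i = zeta g_i: since g_i >= 0 (f is the Moebius inverse
   of a completely monotone function) and g_i vanishes below the minimal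
   element a_i of its support, every path H from a_i to x has
   phi_i(H) <= [a_i <= x] g_i(a_i), with equality for the path (a_i, x); so
   lambda(phi_i; a_i, .) = f(a_i) [a_i <= .] and phi_(i+1) = zeta g_(i+1).
   A completely monotone Psi on the up-sets is antitone for inclusion, and
   every nonempty up-set U lies between <u>^* (u in U) and the up-sets
   containing it, so Pi(Psi_i) = f(a_i) [a_i <= .] forces
   Psi_i U = f(a_i) [U \subset <a_i>^*], and phi_n = 0 forces Psi_n = 0.
   Summing over i gives the Moebius extension. *)

Section Zeta.
Context {d : Order.disp_t} {T : finLatticeType d} {R : realFieldType}.
Implicit Types (g : T -> R) (a x y : T) (s t : seq T).

Definition zeta g : T -> R := fun x => \sum_(y | (y <= x)%O) g y.

Lemma sum_zeta_seq g s :
  \sum_(x <- s) zeta g x = \sum_y g y * (count (fun z => (y <= z)%O) s)%:R.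
Proof.
elim: s => [|x s IH]; first by rewrite big_nil big1 // => y _; rewrite mulr0.
rewrite big_cons IH /zeta big_mkcond -big_split /=; apply: eq_bigr => y _.
by rewrite natrD mulrDr; case: (y <= x)%O; rewrite ?mulr1 ?mulr0 ?add0r.
Qed.

Lemma count_path_le y h0 t :
  (count (fun z => (y <= z)%O) (h0 :: t))%:R
  - (count (fun z => (y <= z)%O) (pairmap (fun u v => (u `|` v)%O) h0 t))%:R
  <= ((y <= h0)%O && (y <= last h0 t)%O)%:R :> R.
Proof.
elim: t h0 => [|h1 t IH] h0 /=; first by rewrite addn0 subr0 andbb.
have := IH h1; rewrite /= !natrD.
case yh0: (y <= h0)%O; case yh1: (y <= h1)%O;
  rewrite ?(le_trans yh0 (leUl _ _)) ?(le_trans yh1 (leUr _ _)) /=;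
  case: (y <= h0 `|` h1)%O; case: (y <= last h1 t)%O => /= h; lra.
Qed.

Lemma pathval_zeta_le g h0 t : (forall y, 0 <= g y) ->
  pathval (zeta g) h0 t <= \sum_y g y * ((y <= h0)%O && (y <= last h0 t)%O)%:R.
Proof.
move=> g_ge0; rewrite /pathval !sum_zeta_seq -sumrB; apply: ler_sum => y _.
by rewrite -mulrBr ler_wpM2l ?count_path_le.
Qed.

Section MinimalSupport.
Variables (g : T -> R) (a : T).
Hypothesis g_lt : forall y, (y < a)%O -> g y = 0.

Lemma lambda_zeta_le x : (forall y, 0 <= g y) ->
  lambda (zeta g) a x <= (if (a <= x)%O then g a else 0).
Proof.
move=> g_ge0.
have path_le t :
    last a t = x -> pathval (zeta g) a t <= if (a <= x)%O then g a else 0.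
  move=> <-; apply: le_trans (pathval_zeta_le g a t g_ge0) _.
  rewrite (bigD1 a) //= lexx big1 ?addr0; first by case: ifP; rewrite ?mulr1 ?mulr0.
  move=> y ya; case: (boolP (y <= a)%O) => //= [yla|]; last by rewrite mulr0.
  by rewrite g_lt ?mul0r // lt_neqAle ya yla.
rewrite /lambda big_seq bigmax_le //; first by apply: path_le; case: eqP.
by move=> t; rewrite mem_filter => /andP[/andP[_ /eqP/path_le]].
Qed.

Lemma lambda_zeta_ge x : (a <= x)%O -> g a <= lambda (zeta g) a x.
Proof.
move=> ax; apply: le_trans (bigmax_ge_id _ _ _ _).
have -> : g a = zeta g a.
  rewrite /zeta (bigD1 a) ?lexx //= big1 ?addr0 // => y /andP[yla ya].
  by rewrite g_lt // lt_neqAle ya yla.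
rewrite /pathval; case: eqP => _; rewrite !big_cons !big_nil /=.
  by rewrite addr0 subr0.
by rewrite join_r // !addr0 addrK.
Qed.

End MinimalSupport.

Lemma eq_lambda {phi psi : T -> R} : phi =1 psi -> lambda phi =2 lambda psi.
Proof.
move=> e a x; have ep h t : pathval phi h t = pathval psi h t.
  by rewrite /pathval; congr (_ - _); apply: eq_bigr => z _.
by rewrite /lambda ep; apply: eq_bigr => t _.
Qed.

Lemma nabla_iter_zeta (f : T -> R) s x :
  foldr (nabla (@Order.meet d T)) (zeta f) s x =
  \sum_(z | (z <= x)%O && all (fun b => ~~ (z <= b)%O) s) f z.
Proof.
elim: s x => [|b s IH] x /=; first by apply: eq_bigl => z; rewrite andbT.
rewrite /nabla !IH (bigID (fun z => (z <= b)%O)) /=.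
under [X in _ - X]eq_bigl => z do rewrite lexI andbAC.
by rewrite addrAC subrr add0r; apply: eq_bigl => z; rewrite andbAC andbA.
Qed.

(* f y is the iterated difference of phi at y along all b < y; for y the
   bottom this is the empty iteration, i.e. phi y itself. *)
Lemma mobius_inv_ge0 (phi f : T -> R) : M_inf_L phi -> phi =1 zeta f ->
  forall y, 0 <= f y.
Proof.
move=> [phi_ge0 cm] phiE y; set s := [seq b <- enum T | (b < y)%O].
have -> : f y = foldr (nabla (@Order.meet d T)) (zeta f) s y.
  rewrite nabla_iter_zeta (eq_bigl (pred1 y)) ?big_pred1_eq // => w /=.
  apply/andP/eqP => [[wy /allP wmax]|->]; last first.
    by split=> //; apply/allP => b; rewrite mem_filter => /andP[/lt_geF ->].
  apply/eqP/negPn/negP => wny.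
  by have := wmax w; rewrite mem_filter lt_neqAle wny wy mem_enum lexx => /(_ isT).
have <- : foldr (nabla (@Order.meet d T)) phi s y =
          foldr (nabla (@Order.meet d T)) (zeta f) s y.
  by clearbody s; elim: s y => [|b s' IH] z /=; rewrite ?phiE // /nabla !IH.
by case: s => [|b s']; [exact: phi_ge0 | apply: cm; rewrite ?all_predT].
Qed.

End Zeta.

Section UpSets.
Context {d : Order.disp_t} {T : finLatticeType d} {R : realFieldType}.
Implicit Types (U V W : {set T}) (Psi : {set T} -> R).

Lemma inLL_prin (x : T) : inLL (prin x).
Proof.
apply/andP; split; first by apply/set0Pn; exists x; rewrite inE.
apply/forallP => u; apply/implyP; rewrite inE => xu; apply/forallP => v.
by apply/implyP => uv; rewrite inE (le_trans xu uv).
Qed.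

Lemma prin_subset {U} {u : T} : up_closed U -> u \in U -> prin u \subset U.
Proof.
move=> upU uU; apply/subsetP => v; rewrite inE => uv.
by move/forallP/(_ u): upU => /implyP/(_ uU)/forallP/(_ v)/implyP; apply.
Qed.

Lemma prin_inj : injective (@prin d T).
Proof.
move=> x y e; apply/le_anti/andP; split.
  have : y \in prin y by rewrite inE lexx.
  by rewrite -e inE.
have : x \in prin x by rewrite inE lexx.
by rewrite e inE.
Qed.

Lemma M_inf_LL_setU_le {Psi W V} : M_inf_LL Psi -> inLL W -> inLL V ->
  Psi (W :|: V) <= Psi W.
Proof.
move=> [_ cm] inW inV; have := cm [:: V] isT; rewrite /= inV => /(_ isT W inW).
by rewrite /nabla subr_ge0.
Qed.

Lemma M_inf_LL_prin_indicator {Psi} (a : T) (c : R) {U} : M_inf_LL Psi ->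
  (forall z, Psi (prin z) = if (a <= z)%O then c else 0) -> inLL U ->
  Psi U = if U \subset prin a then c else 0.
Proof.
move=> PsiM Psi_prin inU; have [Psi_ge0 _] := PsiM.
have /andP[/set0Pn[u uU] upU] := inU.
have le_prin w : w \in U -> Psi U <= Psi (prin w).
  move=> wU; have := M_inf_LL_setU_le PsiM (inLL_prin w) inU.
  by rewrite (setUidPr (prin_subset upU wU)).
apply/le_anti; case: ifP => [Ua|/negbT/subsetPn[w wU]].
  have /subsetP/(_ u uU) := Ua; rewrite inE => au.
  have := le_prin u uU; rewrite Psi_prin au => -> /=.
  have := M_inf_LL_setU_le PsiM inU (inLL_prin a).
  by rewrite (setUidPr Ua) Psi_prin lexx.
rewrite inE => aw; rewrite Psi_ge0 // andbT.
by have := le_prin w wU; rewrite Psi_prin (negbTE aw).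
Qed.

Lemma moebFE (f : T -> R) V :
  moebF f V = \sum_x (if V == prin x then f x else 0).
Proof.
rewrite /moebF; case: pickP => [x0 /eqP -> | none]; last first.
  by rewrite big1 // => x _; rewrite none.
rewrite (bigD1 x0) //= eqxx big1 ?addr0 // => x xne; rewrite ifN //.
by apply: contra xne => /eqP/prin_inj ->.
Qed.

Lemma moebius_extE (f : T -> R) U :
  moebius_ext f U = \sum_x (if U \subset prin x then f x else 0).
Proof.
rewrite /moebius_ext (eq_bigr _ (fun V _ => moebFE f V)).
rewrite exchange_big /=; apply: eq_bigr => x _; rewrite -big_mkcondr.
case: ifP => Ux;
  [rewrite (eq_bigl (pred1 (prin x))) ?big_pred1_eq // | rewrite big_pred0 //];
  by move=> V /=; case: eqP => [->|_]; rewrite ?andbF ?inLL_prin ?Ux.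
Qed.

End UpSets.

Section LinearExtension.
Context {d : Order.disp_t} {T : finLatticeType d} {R : realFieldType}.
Variables (phi f : T -> R) (n : nat) (a : 'I_n -> T) (ai : T -> 'I_n).
Variables (phis : nat -> T -> R) (Psi : nat -> {set T} -> R).
Hypotheses (phi_M : M_inf_L phi) (phiE : phi =1 zeta f).
Hypotheses (aK : cancel a ai) (aiK : cancel ai a).
Hypothesis a_lt : forall i j : 'I_n, (a i < a j)%O -> (i < j)%N.
Hypothesis phis0 : phis 0%N =1 phi.
Hypothesis phisS : forall i : 'I_n, phis i.+1 =1 Lambda (a i) (phis i).
Hypothesis PsiP : forall i : 'I_n,
  M_inf_LL (Psi i) /\ Pi (Psi i) =1 lambda (phis i) (a i).
Hypotheses (Psin_M : M_inf_LL (Psi n)) (Psin_Pi : Pi (Psi n) =1 phis n).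

Definition f_from (i : nat) (y : T) : R := if (i <= ai y)%N then f y else 0.

Lemma f_from_ge0 i y : 0 <= f_from i y.
Proof. by rewrite /f_from; case: ifP => // _; exact: mobius_inv_ge0 phi_M phiE y. Qed.

Lemma f_from_lt (j : 'I_n) y : (y < a j)%O -> f_from j y = 0.
Proof. by move=> ya; rewrite /f_from ifN // -ltnNge a_lt ?aiK. Qed.

Lemma zeta_f_fromS (j : 'I_n) x :
  zeta (f_from j) x = zeta (f_from j.+1) x + (if (a j <= x)%O then f (a j) else 0).
Proof.
have -> : (if (a j <= x)%O then f (a j) else 0) =
          \sum_(y | (y <= x)%O) (if y == a j then f y else 0).
  rewrite -big_mkcondr; case: ifP => ax;
    [rewrite (eq_bigl (pred1 (a j))) ?big_pred1_eq // | rewrite big_pred0 //];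
    by move=> y /=; case: eqP => [->|_]; rewrite ?andbF ?andbT ?ax.
rewrite /zeta -big_split; apply: eq_bigr => y _ /=; rewrite /f_from.
case: eqP => [->|ne]; first by rewrite aK leqnn ltnn add0r.
rewrite leq_eqVlt addr0; case: eqP => // eq_j; case: ne.
by rewrite -(aiK y); congr a; apply: val_inj.
Qed.

Lemma lambda_phis (j : 'I_n) x : phis j =1 zeta (f_from j) ->
  lambda (phis j) (a j) x = if (a j <= x)%O then f (a j) else 0.
Proof.
move=> phisE; rewrite (eq_lambda phisE).
have f_from_aj : f_from j (a j) = f (a j) by rewrite /f_from aK leqnn.
rewrite -f_from_aj; apply/le_anti/andP; split.
  exact: lambda_zeta_le (f_from_lt j) _ (f_from_ge0 j).
case: ifP => ax; first exact: lambda_zeta_ge (f_from_lt j) _ ax.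
have [[Psi_ge0 _] Psi_Pi] := PsiP j.
by rewrite -(eq_lambda phisE) -Psi_Pi Psi_ge0 ?inLL_prin.
Qed.

Lemma phis_zeta {i} : (i <= n)%N -> phis i =1 zeta (f_from i).
Proof.
elim: i => [|i IH] ltin x.
  by rewrite phis0 phiE; apply: eq_bigr => y _; rewrite /f_from leq0n.
have phisE := IH (ltnW ltin); pose j := Ordinal ltin.
by rewrite (phisS j) /Lambda (lambda_phis j x phisE) phisE (zeta_f_fromS j) addrK.
Qed.

Lemma Psi_ord (j : 'I_n) U : inLL U ->
  Psi j U = if U \subset prin (a j) then f (a j) else 0.
Proof.
have [PsiM Psi_Pi] := PsiP j; have phisE := phis_zeta (ltnW (ltn_ord j)).
apply: (M_inf_LL_prin_indicator _ _ PsiM) => z.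
by rewrite -[Psi j _]/(Pi (Psi j) z) Psi_Pi (lambda_phis j z phisE).
Qed.

Lemma Psi_last U : inLL U -> Psi n U = 0.
Proof.
move=> inU; have /andP[/set0Pn[u _] _] := inU.
rewrite (M_inf_LL_prin_indicator u 0 Psin_M _ inU) ?if_same // => z.
rewrite -[Psi n _]/(Pi (Psi n) z) Psin_Pi phis_zeta // if_same /zeta big1 // => y _.
by rewrite /f_from leqNgt ltn_ord.
Qed.

Lemma sum_Psi_moebius_ext U : inLL U ->
  \sum_(i < n.+1) Psi i U = moebius_ext f U.
Proof.
move=> inU; rewrite big_ord_recr /= Psi_last // addr0 moebius_extE.
rewrite (reindex a) /=; last by exists ai => x _; rewrite ?aK ?aiK.
by apply: eq_bigr => i _; rewrite Psi_ord.
Qed.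

End LinearExtension.

Theorem corollary3p17 (d : Order.disp_t) (T : finLatticeType d) (R : realFieldType)
  (phi f : T -> R) (n : nat) (a : 'I_n -> T)
  (phis : nat -> T -> R) (Psi : nat -> {set T} -> R) :
  M_inf_L phi ->
  (forall x, phi x = \sum_(y | (y <= x)%O) f y) ->
  bijective a ->
  (forall i j : 'I_n, (a i < a j)%O -> (i < j)%N) ->
  phis 0%N =1 phi ->
  (forall i : 'I_n, phis i.+1 =1 Lambda (a i) (phis i)) ->
  (forall i : 'I_n, M_inf_LL (Psi i) /\ Pi (Psi i) =1 lambda (phis i) (a i)) ->
  M_inf_LL (Psi n) ->
  Pi (Psi n) =1 phis n ->
  forall U : {set T}, inLL U ->
    \sum_(i < n.+1) Psi i U = moebius_ext f U.
Proof.
move=> phi_M phiE [ai aK aiK] a_lt phis0 phisS PsiP Psin_M Psin_Pi.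
exact: sum_Psi_moebius_ext phi_M phiE aK aiK a_lt phis0 phisS PsiP Psin_M Psin_Pi.
Qed.
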